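(* Let $k\geq2$ be even. If the word $a_k$ followed by $a_k$ overlap at shift $s$ with $0<s<\ell_k$, then $s\geq(N_k-1)\ell_{k-1}$; that is, two copies of $a_k$ can only overlap with the initial segment $a_{k-1}$ of one copy overlapping the terminal segment $a_{k-1}$ of the other.
   Context: Alphabet $\{0,1,2\}$. Let $(N_k)_{k\geq1}$ be integers with $N_k\geq4$, $\ell_0=2$, $\ell_k=N_k\ell_{k-1}$. Words: $a_0=01$; for odd $k\geq1$, $a_k=(a_{k-1})^{N_k}$ (concatenation of $N_k$ copies); for even $k\geq2$, $a_k=a_{k-1}1^{(N_k-2)\ell_{k-1}}a_{k-1}$. Two words $u,v$ of the same length $\ell$ overlap with $u$ followed by $v$ at shift $s$ ($0<s<\ell$) if the terminal segment of length $\ell-s$ of $u$ equals the initial segment of length $\ell-s$ of $v$. *)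

From mathcomp Require Import all_boot.
Set Implicit Arguments. Unset Strict Implicit. Unset Printing Implicit Defensive.

(* Words over the alphabet {0,1,2} are represented as sequences of naturals.
   N k is the parameter N_k (only values for k >= 1 are used). *)

Fixpoint ell (N : nat -> nat) (k : nat) : nat :=
  match k with
  | 0 => 2
  | k'.+1 => N k'.+1 * ell N k'
  end.

Definition wpow (w : seq nat) (n : nat) : seq nat := flatten (nseq n w).

Fixpoint aw (N : nat -> nat) (k : nat) : seq nat :=
  match k with
  | 0 => [:: 0; 1]
  | k'.+1 =>
      if odd k'.+1 then wpow (aw N k') (N k'.+1)
      else aw N k' ++ nseq ((N k'.+1 - 2) * ell N k') 1 ++ aw N k'
  end.

Definition overlap (u v : seq nat) (s : nat) : Prop :=
  size u = size v /\ 0 < s < size u /\ drop s u = take (size u - s) v.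

From mathcomp Require Import all_boot.
From mathcomp Require Import zify.

(* Write a_k = A 1^m A with A = a_{k-1}, L = ell_{k-1}, m = (N_k - 2) L.  Every
   a_j begins and ends with 01, and a self-overlap at shift s forces
   a_k[s + j] = a_k[j] wherever both sides are defined.  For s = 1 compare the
   letters 0 and 1 at the start; for 2 <= s < L the 0 in position L - 2 of the
   first A is matched against a letter of the block 1^m; for L <= s < L + m the
   initial 0 is matched against the block. *)

Lemma overlap_nth (u v : seq nat) s j :
  overlap u v s -> j < size u - s -> nth 0 u (s + j) = nth 0 v j.
Proof. by case=> _ [_ ov] lt_j; rewrite -nth_drop ov nth_take. Qed.

Lemma wpowSr (w : seq nat) n : wpow w n.+1 = wpow w n ++ w.
Proof.
elim: n => [|n IHn]; first by rewrite /wpow /= cats0.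
by rewrite -[LHS]/(w ++ wpow w n.+1) {1}IHn catA.
Qed.

Lemma size_wpow (w : seq nat) n : size (wpow w n) = n * size w.
Proof. by elim: n => //= n IHn; rewrite size_cat IHn mulSn. Qed.

Section BlockWord.
Variables (A : seq nat) (m : nat).
Hypotheses (A_pre : prefix [:: 0; 1] A) (A_suf : suffix [:: 0; 1] A).
Hypotheses (m_gt0 : 0 < m) (A_le_block : size A <= m + 2).

Let w := A ++ nseq m 1 ++ A.

Lemma nth_block_left i : i < size A -> nth 0 w i = nth 0 A i.
Proof. by move=> lt_iL; rewrite /w nth_cat lt_iL. Qed.

Lemma nth_block_mid i : size A <= i < size A + m -> nth 0 w i = 1.
Proof.
case/andP=> le_Li lt_i; rewrite /w nth_cat ltnNge le_Li /= nth_cat size_nseq.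
have lt_im : i - size A < m by lia.
by rewrite lt_im nth_nseq lt_im.
Qed.

Lemma block_word_shift_ge s :
  0 < s -> (forall j, j < size w - s -> nth 0 w (s + j) = nth 0 w j) ->
  size A + m <= s.
Proof.
move=> s_gt0 per; have L_ge2 : 2 <= size A := size_infix (prefixW A_pre).
have size_w : size w = size A + m + size A by rewrite /w !size_cat size_nseq addnA.
case: (prefixP A_pre) => t At; case: (suffixP A_suf) => t' At'.
have A0 : nth 0 A 0 = 0 by rewrite At.
have A1 : nth 0 A 1 = 1 by rewrite At.
have A_end : nth 0 A (size A - 2) = 0.
  by rewrite At' size_cat /= addnK nth_cat ltnn subnn.
rewrite leqNgt; apply/negP => lt_s.
have [s1|s_ge2] := eqVneq s 1.
  have := per 0; rewrite size_w s1 addn0 !nth_block_left ?A0 ?A1; lia.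
have [lt_sL|le_Ls] := ltnP s (size A).
  have := per (size A - 2).
  by rewrite size_w (nth_block_left (size A - 2)) ?A_end ?nth_block_mid; lia.
have := per 0; rewrite size_w addn0 (nth_block_left 0) ?A0 ?nth_block_mid; lia.
Qed.

End BlockWord.

Section Words.
Variable N : nat -> nat.
Hypothesis N_ge2 : forall j, 0 < j -> 2 <= N j.

Lemma aw_prefix01 j : prefix [:: 0; 1] (aw N j).
Proof.
elim: j => //= j IHj; case: ifP => _; last exact: prefix_catl.
by case: (N j.+1) (N_ge2 j.+1 isT) => // n _; apply: prefix_catl.
Qed.

Lemma aw_suffix01 j : suffix [:: 0; 1] (aw N j).
Proof.
elim: j => //= j IHj; case: ifP => _; last by rewrite catA; apply: suffix_catr.
by case: (N j.+1) (N_ge2 j.+1 isT) => // n _; rewrite wpowSr; apply: suffix_catr.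
Qed.

Lemma size_aw j : size (aw N j) = ell N j.
Proof.
elim: j => //= j IHj; case: ifP => _; first by rewrite size_wpow IHj.
have := N_ge2 j.+1 isT; rewrite !size_cat size_nseq IHj; nia.
Qed.

Lemma aw_even k : odd k ->
  aw N k.+1 = aw N k ++ nseq ((N k.+1 - 2) * ell N k) 1 ++ aw N k.
Proof. by move=> odd_k /=; rewrite odd_k. Qed.

Lemma ell_ge2 j : 2 <= ell N j.
Proof. rewrite -size_aw; exact: size_infix (prefixW (aw_prefix01 j)). Qed.

End Words.

Theorem lemma3p3 (N : nat -> nat) (hN : forall j, 1 <= j -> 4 <= N j)
  (k : nat) (hk2 : 2 <= k) (hkev : ~~ odd k) (s : nat) :
  0 < s < ell N k -> overlap (aw N k) (aw N k) s ->
  (N k - 1) * ell N k.-1 <= s.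
Proof.
have N_ge2 j : 0 < j -> 2 <= N j by move=> /hN; lia.
case: k hk2 hkev => [|k] // _ even_k1 /andP[s_gt0 _].
have odd_k : odd k by move: even_k1; rewrite /= negbK.
rewrite aw_even // -[k.+1.-1]/k => ov.
have L_ge2 := ell_ge2 N N_ge2 k; have N_ge4 := hN k.+1 isT.
suff: ell N k + (N k.+1 - 2) * ell N k <= s by nia.
rewrite -(size_aw N N_ge2 k).
apply: block_word_shift_ge s_gt0 _ => [||||j]; rewrite ?size_aw //.
- exact: aw_prefix01.
- exact: aw_suffix01.
- by nia.
- by nia.
- exact: overlap_nth.
Qed.
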